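(* Let $\mathcal{M},\mathcal{L}\in\mathbb{C}^{2n\times2n}$ be such that $(\mathcal{M},\mathcal{L})$ is a regular symplectic pair with $\mathrm{ind}_\infty(\mathcal{M},\mathcal{L})\le 1$. Then there is an integer $\hat n\le n$ with $\mathrm{rank}(\mathcal{M})=\mathrm{rank}(\mathcal{L})=n+\hat n$. Moreover, with $\ell=n-\hat n$, there exist $U_0,U_\infty\in\mathbb{C}^{2n\times\ell}$, $U_1\in\mathbb{C}^{2n\times 2\hat n}$ and a symplectic matrix $\widehat{\mathcal{S}}\in\mathbb{C}^{2\hat n\times2\hat n}$ such that, with $\mathbf{U}=[U_1\,|\,U_0,U_\infty]\in\mathbb{C}^{2n\times 2n}$, $$\mathbf{U}^H\mathcal{J}_n\mathbf{U}=\begin{bmatrix}\mathcal{J}_{\hat n}&0\\0&\mathcal{J}_\ell\end{bmatrix}$$ and $$\mathcal{M}U_0=0,\qquad \mathcal{L}U_\infty=0,\qquad \mathcal{M}U_1=\mathcal{L}U_1\widehat{\mathcal{S}}.$$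
   Context: $\mathcal{J}_m=\begin{bmatrix}0&I_m\\-I_m&0\end{bmatrix}$ (absent if $m=0$). A matrix $\mathcal{S}\in\mathbb{C}^{2m\times2m}$ is symplectic if $\mathcal{S}\mathcal{J}_m\mathcal{S}^H=\mathcal{J}_m$. A pair $(\mathcal{M},\mathcal{L})$ of $2n\times2n$ matrices is symplectic if $\mathcal{M}\mathcal{J}_n\mathcal{M}^H=\mathcal{L}\mathcal{J}_n\mathcal{L}^H$, and regular if $\det(\mathcal{M}-\lambda\mathcal{L})\ne0$ for some $\lambda\in\mathbb{C}$. For a regular pair $(A,B)$ there are invertible $P,Q$ with $PAQ=\mathrm{diag}(J,I)$, $PBQ=\mathrm{diag}(I,N)$ where $J$ is a Jordan matrix and $N$ is nilpotent (Kronecker canonical form); $\mathrm{ind}_\infty(A,B)$ is the nilpotency index of $N$ (the least $\nu$ with $N^\nu=0$), and by convention $\mathrm{ind}_\infty(A,B)=0$ if $B$ is invertible. *)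

(* The complex field is modelled as R[i] = complex R for an
   arbitrary R : realType (every realType is (isomorphic to) the reals). *)
From HB Require Import structures.
From mathcomp Require Import all_boot all_order all_algebra.
From mathcomp Require Import complex.
From mathcomp Require Import reals.
Set Implicit Arguments. Unset Strict Implicit. Unset Printing Implicit Defensive.
Import Order.TTheory GRing.Theory Num.Theory.
Local Open Scope ring_scope.

Definition ctrmx (F : numClosedFieldType) m n (A : 'M[F]_(m, n)) : 'M[F]_(n, m) :=
  (map_mx Num.conj A)^T.

Definition Jmx (F : numClosedFieldType) (m : nat) : 'M[F]_(m + m) :=
  block_mx 0 1%:M (- 1%:M) 0.

Definition symplectic (F : numClosedFieldType) m (S : 'M[F]_(m + m)) : Prop :=
  S *m Jmx F m *m ctrmx S = Jmx F m.

Definition symplectic_pair (F : numClosedFieldType) n (M L : 'M[F]_(n + n)) : Prop :=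
  M *m Jmx F n *m ctrmx M = L *m Jmx F n *m ctrmx L.

Definition regular_pair (F : numClosedFieldType) k (A B : 'M[F]_k) : Prop :=
  exists lambda : F, \det (A - lambda *: B) != 0.

Definition jordan_mx (F : fieldType) k (J : 'M[F]_k) : Prop :=
  forall i j : 'I_k,
    (i != j -> j != i.+1 :> nat -> J i j = 0) /\
    (j = i.+1 :> nat -> (J i j = 0 \/ (J i j = 1 /\ J i i = J j j))).

Definition kcf (F : fieldType) (N : nat) (A B : 'M[F]_N)
  (k m : nat) (e : k + m = N) (J : 'M[F]_k) (Nil : 'M[F]_m) : Prop :=
  jordan_mx J /\ (exists p, Nil ^+ p = 0) /\
  exists P Q : 'M[F]_N, P \in unitmx /\ Q \in unitmx /\
    P *m A *m Q = castmx (e, e) (block_mx J 0 0 1%:M) /\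
    P *m B *m Q = castmx (e, e) (block_mx 1%:M 0 0 Nil).

(* ind_oo(A,B) <= nu : the nilpotent part of the Kronecker canonical form
   has nilpotency index <= nu (index 0 iff the nilpotent block is empty,
   i.e. B invertible). The index is an invariant of the pencil. *)
Definition ind_inf_le (F : fieldType) (N : nat) (A B : 'M[F]_N) (nu : nat) : Prop :=
  exists k m (e : k + m = N) (J : 'M[F]_k) (Nil : 'M[F]_m),
    kcf A B e J Nil /\ Nil ^+ nu = 0.

(* Since ind_oo(M, L) <= 1, the nilpotent block of the Kronecker form vanishes:
   P M Q = diag(A, I_m) and P L Q = diag(I_k, 0).  In the coordinates W = Q^-1
   the symplectic form becomes the nonsingular skew-Hermitian G = W J W^H, and
   M J M^H = L J L^H reads A G11 A^H = G11, A G12 = 0, G22 = 0.  Nonsingularity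
   of G gives rank G12 = m and rank A = k - m, so k = n + nh with 2 nh = k - m.
   G11 is nondegenerate on the left kernel of G12, which has dimension 2 nh.
   Such a form need not have an nh-dimensional isotropic subspace; here one is
   cut out of the Lagrangian [I; 0] of J, and it is completed to a G11-symplectic
   basis R of the kernel.  A preserves the kernel and G11, so its matrix on R is
   (the inverse adjoint of) the symplectic Sh, while U0 and Uinf come from the
   kernels of diag(A, I) and diag(I, 0). *)

From HB Require Import structures.
From mathcomp Require Import all_boot all_order all_algebra.
From mathcomp Require Import complex.
From mathcomp Require Import reals.
From mathcomp Require Import zify ring.
Set Implicit Arguments. Unset Strict Implicit. Unset Printing Implicit Defensive.
Import Order.TTheory GRing.Theory Num.Theory.
Local Open Scope ring_scope.

Section ConjTranspose.
Variable F : numClosedFieldType.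

Lemma ctrmx_mul m n p (A : 'M[F]_(m, n)) (B : 'M[F]_(n, p)) :
  ctrmx (A *m B) = ctrmx B *m ctrmx A.
Proof. by rewrite /ctrmx map_mxM trmx_mul. Qed.

Lemma ctrmxK m n (A : 'M[F]_(m, n)) : ctrmx (ctrmx A) = A.
Proof. by apply/matrixP=> i j; rewrite !mxE conjCK. Qed.

Lemma ctrmxD m n (A B : 'M[F]_(m, n)) : ctrmx (A + B) = ctrmx A + ctrmx B.
Proof. by apply/matrixP=> i j; rewrite !mxE rmorphD. Qed.

Lemma ctrmxN m n (A : 'M[F]_(m, n)) : ctrmx (- A) = - ctrmx A.
Proof. by apply/matrixP=> i j; rewrite !mxE rmorphN. Qed.

Lemma ctrmxB m n (A B : 'M[F]_(m, n)) : ctrmx (A - B) = ctrmx A - ctrmx B.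
Proof. by rewrite ctrmxD ctrmxN. Qed.

Lemma ctrmxZ m n (a : F) (A : 'M[F]_(m, n)) : ctrmx (a *: A) = a^* *: ctrmx A.
Proof. by apply/matrixP=> i j; rewrite !mxE rmorphM. Qed.

Lemma ctrmx0 m n : ctrmx (0 : 'M[F]_(m, n)) = 0.
Proof. by apply/matrixP=> i j; rewrite !mxE rmorph0. Qed.

Lemma ctrmx1 n : ctrmx (1%:M : 'M[F]_n) = 1%:M.
Proof.
by apply/matrixP=> i j; rewrite !mxE eq_sym; case: eqP; rewrite ?rmorph1 ?rmorph0.
Qed.

Lemma ctrmx_row_mx m n1 n2 (A : 'M[F]_(m, n1)) (B : 'M[F]_(m, n2)) :
  ctrmx (row_mx A B) = col_mx (ctrmx A) (ctrmx B).
Proof. by rewrite /ctrmx map_row_mx tr_row_mx. Qed.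

Lemma ctrmx_col_mx m1 m2 n (A : 'M[F]_(m1, n)) (B : 'M[F]_(m2, n)) :
  ctrmx (col_mx A B) = row_mx (ctrmx A) (ctrmx B).
Proof. by rewrite /ctrmx map_col_mx tr_col_mx. Qed.

Lemma ctrmx_block_mx m1 m2 n1 n2 (A : 'M[F]_(m1, n1)) (B : 'M[F]_(m1, n2))
    (C : 'M[F]_(m2, n1)) (D : 'M[F]_(m2, n2)) :
  ctrmx (block_mx A B C D) = block_mx (ctrmx A) (ctrmx C) (ctrmx B) (ctrmx D).
Proof. by rewrite /ctrmx map_block_mx tr_block_mx. Qed.

Lemma mxrank_ctrmx m n (A : 'M[F]_(m, n)) : \rank (ctrmx A) = \rank A.
Proof. by rewrite /ctrmx mxrank_tr mxrank_map. Qed.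

Lemma unitmx_ctrmx n (A : 'M[F]_n) : A \in unitmx -> ctrmx A \in unitmx.
Proof.
move=> uA; have := congr1 (@ctrmx F n n) (mulmxV uA).
by rewrite ctrmx_mul ctrmx1 => /mulmx1_unit [].
Qed.

Lemma skew_form_ctrmx r s k (X : 'M[F]_(r, k)) (Y : 'M[F]_(s, k)) (G : 'M[F]_k) :
  ctrmx G = - G -> Y *m G *m ctrmx X = - ctrmx (X *m G *m ctrmx Y).
Proof. by move=> skewG; rewrite !ctrmx_mul ctrmxK skewG mulNmx mulmxN opprK mulmxA. Qed.

Lemma ctrmx_Jmx m : ctrmx (Jmx F m) = - Jmx F m.
Proof.
rewrite /Jmx ctrmx_block_mx !ctrmx0 ctrmxN ctrmx1.
by rewrite -[RHS]scaleN1r scale_block_mx !scaleN1r oppr0 opprK.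
Qed.

Lemma Jmx_mulJmx m : Jmx F m *m Jmx F m = - 1%:M.
Proof.
rewrite /Jmx mulmx_block !mulmx0 !mul0mx !mul1mx !mulmx1 !add0r !addr0.
by rewrite -[RHS]scaleN1r (scalar_mx_block m m 1) scale_block_mx !scaleN1r oppr0.
Qed.

End ConjTranspose.

Lemma unitmx_sqrN1 (F : fieldType) n (J : 'M[F]_n) : J *m J = - 1%:M -> J \in unitmx.
Proof. by move=> JJ; case: (@mulmx1_unit _ _ J (- J)); rewrite // mulmxN JJ opprK. Qed.

Lemma exists_row_free_submx (F : fieldType) h n m (B : 'M[F]_(m, n)) :
  (h <= \rank B)%N -> exists X : 'M[F]_(h, n), (X <= B)%MS /\ row_free X.
Proof.
move=> hB; exists ((pid_mx h : 'M_(h, \rank B)) *m row_base B); split.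
  by rewrite (submx_trans (submxMl _ _)) // eq_row_base.
by rewrite /row_free mxrankMfree ?row_base_free // rank_pid_mx.
Qed.

Definition symplectic_decomposition (F : numClosedFieldType) N (M L Jf : 'M[F]_N)
    h l : Prop :=
  exists (U0 Ui : 'M[F]_(N, l)) (U1 : 'M[F]_(N, h + h)) (S : 'M[F]_(h + h)),
    symplectic S /\
    ctrmx (row_mx U1 (row_mx U0 Ui)) *m Jf *m row_mx U1 (row_mx U0 Ui)
      = block_mx (Jmx F h) 0 0 (Jmx F l) /\
    M *m U0 = 0 /\ L *m Ui = 0 /\ M *m U1 = L *m U1 *m S.

Lemma symplectic_decomposition_transport (F : numClosedFieldType) N K
    (M L Jf : 'M[F]_N) (M' L' G : 'M[F]_K) (T P : 'M[F]_(N, K)) h l :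
  ctrmx T *m Jf *m T = G -> M *m T = P *m M' -> L *m T = P *m L' ->
  symplectic_decomposition M' L' G h l -> symplectic_decomposition M L Jf h l.
Proof.
move=> TJT MT LT [U0 [Ui [U1 [S [sS [UGU [MU0 [LUi MU1]]]]]]]].
exists (T *m U0), (T *m Ui), (T *m U1), S; split=> //.
split; first by rewrite -!mul_mx_row ctrmx_mul -UGU -TJT !mulmxA.
by rewrite !mulmxA MT LT -!mulmxA MU0 LUi (mulmxA L') MU1 !mulmx0 !mulmxA.
Qed.

Lemma symplectic_inv_ctrmx (F : numClosedFieldType) h (D : 'M[F]_(h + h)) :
  D *m Jmx F h *m ctrmx D = Jmx F h ->
  ctrmx D \in unitmx /\ symplectic (invmx (ctrmx D)).
Proof.
set J := Jmx F h => DJD.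
have JJ : J *m J = - 1%:M by exact: Jmx_mulJmx.
have DJ : D *m (- (J *m ctrmx D *m J)) = 1%:M by rewrite mulmxN !mulmxA DJD JJ opprK.
have D'JD : ctrmx D *m J *m D = J.
  have := congr1 (mulmx J) (mulmx1C DJ).
  by rewrite mulNmx mulmxN !mulmxA JJ !mulNmx opprK mul1mx mulmx1.
have uD' : ctrmx D \in unitmx.
  case: (@mulmx1_unit _ _ (ctrmx D) (J *m D *m - J)) => //.
  by rewrite !mulmxN !mulmxA D'JD JJ opprK.
split=> //; rewrite /symplectic -/J.
have DV : D *m ctrmx (invmx (ctrmx D)) = 1%:M.
  by rewrite -{1}(ctrmxK D) -ctrmx_mul mulVmx // ctrmx1.
by rewrite -{1}D'JD !mulmxA mulVmx // mul1mx -mulmxA DV mulmx1.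
Qed.

Section DiagonalPencil.
Variable F : numClosedFieldType.
Variables (k m : nat) (A : 'M[F]_k) (G : 'M[F]_(k + m)).
Local Notation DM := (block_mx A 0 0 1%:M : 'M[F]_(k + m)).
Local Notation DL := (block_mx 1%:M 0 0 0 : 'M[F]_(k + m)).
Local Notation G11 := (ulsubmx G).
Local Notation G12 := (ursubmx G).
Hypothesis skewG : ctrmx G = - G.
Hypothesis unitG : G \in unitmx.
Hypothesis pairG : DM *m G *m ctrmx DM = DL *m G *m ctrmx DL.

Lemma skew_blocks : ctrmx G11 = - G11 /\ dlsubmx G = - ctrmx G12.
Proof.
have := skewG; rewrite -[X in ctrmx X = _]submxK -[X in _ = - X]submxK.
rewrite ctrmx_block_mx -scaleN1r scale_block_mx !scaleN1r.
case/eq_block_mx => -> h21 _ _; split=> //.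
by rewrite -[LHS]ctrmxK h21 ctrmxN.
Qed.

Lemma pair_blocks :
  [/\ A *m G11 *m ctrmx A = G11, A *m G12 = 0 & drsubmx G = 0].
Proof.
move: pairG; rewrite -[X in _ *m X *m _ = _]submxK -[X in _ = _ *m X *m _]submxK.
rewrite !ctrmx_block_mx !mulmx_block !ctrmx0 !ctrmx1.
rewrite ?mulmx0 ?mul0mx ?mulmx1 ?mul1mx ?addr0 ?add0r.
by case/eq_block_mx => ? ? _ ?.
Qed.

Lemma ctrmx_G11 : ctrmx G11 = - G11. Proof. by case: skew_blocks. Qed.
Lemma A_G11_unitary : A *m G11 *m ctrmx A = G11. Proof. by case: pair_blocks. Qed.
Lemma mulA_G12 : A *m G12 = 0. Proof. by case: pair_blocks. Qed.

Lemma G_blockE : G = block_mx G11 G12 (- ctrmx G12) 0.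
Proof. by case: skew_blocks => _ <-; case: pair_blocks => _ _ <-; rewrite submxK. Qed.


Lemma eq0_mulG11_mulG12 r (X : 'M[F]_(r, k)) : X *m G11 = 0 -> X *m G12 = 0 -> X = 0.
Proof.
move=> XG11 XG12; have : row_mx X 0 *m G = 0.
  by rewrite G_blockE mul_row_block XG11 XG12 !mul0mx !addr0 row_mx0.
by move/eqP; rewrite mulmx_free_eq0 ?row_free_unit // row_mx_eq0 => /andP[/eqP].
Qed.

Lemma kerA_mulG11 r (X : 'M[F]_(r, k)) : X *m A = 0 -> X *m G11 = 0.
Proof. by move=> XA; rewrite -A_G11_unitary !mulmxA XA !mul0mx. Qed.

Lemma kerA_G11_ctrmx r (X : 'M[F]_(r, k)) : X *m A = 0 -> G11 *m ctrmx X = 0.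
Proof.
move=> XA; rewrite -[G11]opprK -ctrmx_G11 mulNmx -ctrmx_mul.
by rewrite kerA_mulG11 // ctrmx0 oppr0.
Qed.

Lemma mxrank_G12 : \rank G12 = m.
Proof.
have DG : row_mx 0 1%:M *m G = row_mx (- ctrmx G12) (0 : 'M[F]_m).
  by rewrite {1}G_blockE mul_row_block !mul0mx !add0r !mul1mx.
rewrite -mxrank_ctrmx -(eqmx_opp (ctrmx G12)) -(@rank_row_mx0 F _ _ m) -DG.
by rewrite mxrankMfree ?row_free_unit // rank_row_0mx mxrank1.
Qed.

Lemma mxrank_kerA_G12 : \rank (kermx A *m G12) = \rank (kermx A).
Proof.
have := mxrank_mul_ker (kermx A) G12.
suff -> : (kermx A :&: kermx G12)%MS = 0 by rewrite mxrank0 addn0.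
apply: eq0_mulG11_mulG12; last by apply/sub_kermxP; exact: capmxSr.
by apply: kerA_mulG11; apply/sub_kermxP; exact: capmxSl.
Qed.

Lemma mxrank_A : (m <= k)%N /\ \rank A = (k - m)%N.
Proof.
have := mulmx0_rank_max mulA_G12; rewrite mxrank_G12.
have := rank_leq_col (kermx A *m G12); rewrite mxrank_kerA_G12 mxrank_ker.
have := rank_leq_row A; lia.
Qed.

Lemma exists_kerA_dual_G12 :
  exists N0 : 'M[F]_(m, k), N0 *m A = 0 /\ N0 *m G12 = 1%:M.
Proof.
have : row_full (kermx A *m G12).
  rewrite /row_full mxrank_kerA_G12 mxrank_ker.
  by case: mxrank_A => ? ->; apply/eqP; lia.
case/row_fullP => B BKG; exists (B *m kermx A).
by rewrite -!(mulmxA B) mulmx_ker mulmx0 BKG.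
Qed.

Lemma form_row_mx p (Lu : 'M[F]_(p, k)) (Lv : 'M[F]_(p, m)) :
  row_mx Lu Lv *m G *m ctrmx (row_mx Lu Lv)
    = Lu *m G11 *m ctrmx Lu - Lv *m ctrmx G12 *m ctrmx Lu + Lu *m G12 *m ctrmx Lv.
Proof.
rewrite {1}G_blockE mul_row_block ctrmx_row_mx mul_row_col !mulmx0 addr0 mulmxDl.
by rewrite mulmxN mulNmx.
Qed.

Lemma lagrangian_rank_bound p (Lu : 'M[F]_(p, k)) (Lv : 'M[F]_(p, m)) :
  row_mx Lu Lv *m G *m ctrmx (row_mx Lu Lv) = 0 -> row_free (row_mx Lu Lv) ->
  (\rank (kermx Lu) + \rank (Lu *m G12) <= m)%N.
Proof.
rewrite form_row_mx => iso rfL.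
have KLv : kermx Lu *m Lv *m ctrmx (Lu *m G12) = 0.
  have := congr1 (mulmx (kermx Lu)) iso.
  rewrite mulmx0 !mulmxDr mulmxN !mulmxA mulmx_ker !mul0mx add0r addr0 => /eqP.
  by rewrite oppr_eq0 => /eqP; rewrite ctrmx_mul mulmxA.
have rKLv : \rank (kermx Lu *m Lv) = \rank (kermx Lu).
  have := mxrank_mul_ker (kermx Lu) Lv.
  suff -> : (kermx Lu :&: kermx Lv)%MS = 0 by rewrite mxrank0 addn0.
  apply/eqP; rewrite -(mulmx_free_eq0 _ rfL) mul_mx_row row_mx_eq0.
  by apply/andP; split; apply/eqP/sub_kermxP; [exact: capmxSl | exact: capmxSr].
by have := mulmx0_rank_max KLv; rewrite rKLv mxrank_ctrmx.
Qed.

Lemma isotropic_kerG12 p (Lu : 'M[F]_(p, k)) (Lv : 'M[F]_(p, m)) :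
  row_mx Lu Lv *m G *m ctrmx (row_mx Lu Lv) = 0 ->
  exists I : 'M[F]_(p, k), [/\ I *m G11 *m ctrmx I = 0, I *m G12 = 0
                            & \rank I = (\rank Lu - \rank (Lu *m G12))%N].
Proof.
rewrite form_row_mx => iso.
set T := kermx (Lu *m G12).
have TLG : T *m Lu *m G12 = 0 by rewrite -mulmxA mulmx_ker.
have GLT : ctrmx G12 *m ctrmx Lu *m ctrmx T = 0 by rewrite -!ctrmx_mul mulmxA TLG ctrmx0.
exists (T *m Lu); split=> //.
  have := congr1 (fun X => T *m X *m ctrmx T) iso.
  rewrite /= mulmx0 mul0mx !mulmxDr !mulmxDl mulmxN mulNmx.
  have -> : T *m (Lv *m ctrmx G12 *m ctrmx Lu) *m ctrmx T
          = T *m Lv *m (ctrmx G12 *m ctrmx Lu *m ctrmx T) by rewrite !mulmxA.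
  rewrite GLT mulmx0 oppr0 addr0 !mulmxA TLG !mul0mx addr0.
  by rewrite (ctrmx_mul T) !mulmxA.
have kLuT : (kermx Lu <= T)%MS by apply/sub_kermxP; rewrite mulmxA mulmx_ker mul0mx.
have := mxrank_mul_ker T Lu; rewrite (capmx_idPr kLuT) !mxrank_ker.
have := mxrankM_maxl Lu G12; have := rank_leq_row Lu; lia.
Qed.

Lemma exists_isotropic_kerG12 p h (Lam : 'M[F]_(p, k + m)) :
  Lam *m G *m ctrmx Lam = 0 -> row_free Lam -> (p + p = k + m)%N -> (h + h + m = k)%N ->
  exists X0 : 'M[F]_(h, k),
    [/\ X0 *m G11 *m ctrmx X0 = 0, X0 *m G12 = 0 & row_free X0].
Proof.
rewrite -[Lam]hsubmxK => iso rfL pkm hkm.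
have bound := lagrangian_rank_bound iso rfL.
have [I [isoI IG12 rI]] := isotropic_kerG12 iso.
have [X0 [/submxP[D ->] rfX0]] :
    exists X0 : 'M[F]_(h, k), (X0 <= I)%MS /\ row_free X0.
  apply: exists_row_free_submx; rewrite rI; move: bound; rewrite mxrank_ker.
  have := mxrankM_maxl (lsubmx Lam) G12; have := rank_leq_row (lsubmx Lam); lia.
exists (D *m I); split=> //; last by rewrite -mulmxA IG12 mulmx0.
have -> : D *m I *m G11 *m ctrmx (D *m I) = D *m (I *m G11 *m ctrmx I) *m ctrmx D.
  by rewrite ctrmx_mul !mulmxA.
by rewrite isoI mulmx0 mul0mx.
Qed.

Lemma exists_dual_kerG12 h (X0 : 'M[F]_(h, k)) :
  X0 *m G12 = 0 -> row_free X0 ->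
  exists Y : 'M[F]_(h, k), Y *m G12 = 0 /\ X0 *m G11 *m ctrmx Y = 1%:M.
Proof.
move=> X0G12 rfX0.
have rfXG : row_free (X0 *m G11).
  rewrite /row_free; have := mxrank_mul_ker X0 G11.
  suff -> : (X0 :&: kermx G11)%MS = 0 by rewrite mxrank0 addn0 => ->.
  apply: eq0_mulG11_mulG12; first by apply/sub_kermxP; exact: capmxSr.
  by case/submxP: (capmxSl X0 (kermx G11)) => D ->; rewrite -mulmxA X0G12 mulmx0.
have [N0 [N0A N0G12]] := exists_kerA_dual_G12.
set Y := ctrmx (pinvmx (X0 *m G11)).
have X0Y : X0 *m G11 *m ctrmx Y = 1%:M by rewrite ctrmxK mulmxVp.
exists (Y - Y *m G12 *m N0); split.
  by rewrite mulmxBl -(mulmxA (Y *m G12)) N0G12 mulmx1 subrr.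
rewrite ctrmxB mulmxBr X0Y (ctrmx_mul (Y *m G12)) mulmxA -(mulmxA X0).
by rewrite kerA_G11_ctrmx // mulmx0 mul0mx subr0.
Qed.

Lemma exists_symplectic_basis_kerG12 h (X0 : 'M[F]_(h, k)) :
  X0 *m G11 *m ctrmx X0 = 0 -> X0 *m G12 = 0 -> row_free X0 ->
  exists R : 'M[F]_(h + h, k), R *m G11 *m ctrmx R = Jmx F h /\ R *m G12 = 0.
Proof.
move=> isoX0 X0G12 rfX0.
have [Y [YG12 X0Y]] := exists_dual_kerG12 X0G12 rfX0.
set K := Y *m G11 *m ctrmx Y.
have skewK : ctrmx K = - K.
  by rewrite {2}/K (skew_form_ctrmx Y Y ctrmx_G11) opprK.
(* Removing half of the Gram matrix K along X0 makes the dual isotropic. *)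
set Xi := Y - (2^-1 *: K) *m X0.
have X0Xi : X0 *m G11 *m ctrmx Xi = 1%:M.
  by rewrite ctrmxB mulmxBr X0Y ctrmx_mul mulmxA isoX0 mul0mx subr0.
have XiX0 : Xi *m G11 *m ctrmx X0 = - 1%:M.
  by rewrite (skew_form_ctrmx _ _ ctrmx_G11) X0Xi ctrmx1.
have isoXi : Xi *m G11 *m ctrmx Xi = 0.
  have -> : ctrmx Xi = ctrmx Y + 2^-1 *: (ctrmx X0 *m K).
    rewrite ctrmxB ctrmx_mul ctrmxZ fmorphV rmorph_nat skewK scalerN mulmxN opprK.
    by congr (_ + _); symmetry; exact: scalemxAr.
  rewrite mulmxDr -scalemxAr mulmxA XiX0 mulNmx mul1mx.
  have KX0Y : K *m X0 *m G11 *m ctrmx Y = K by rewrite -[RHS]mulmx1 -X0Y !mulmxA.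
  rewrite {1}/Xi mulmxBl mulmxBl -/K -!scalemxAl KX0Y scalerN -addrA -opprD -scalerDl.
  have -> : (2^-1 : F) + 2^-1 = 1 by field.
  by rewrite scale1r subrr.
exists (col_mx X0 Xi); split.
  by rewrite ctrmx_col_mx !mul_col_mx !mul_mx_row isoX0 X0Xi XiX0 isoXi.
by rewrite mul_col_mx X0G12 mulmxBl YG12 -mulmxA X0G12 mulmx0 subrr col_mx0.
Qed.

Lemma kerG12_eq_span h (R : 'M[F]_(h + h, k)) :
  R *m G11 *m ctrmx R = Jmx F h -> R *m G12 = 0 -> (h + h + m = k)%N ->
  (kermx G12 :=: R)%MS.
Proof.
move=> RJ RG12 hkm.
have rR : \rank R = (h + h)%N.
  apply/eqP; rewrite eqn_leq rank_leq_row /=.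
  rewrite -{1}(mxrank_unit (unitmx_sqrN1 (Jmx_mulJmx F h))) -RJ.
  exact: leq_trans (mxrankM_maxl _ _) (mxrankM_maxl _ _).
have sRK : (R <= kermx G12)%MS by apply/sub_kermxP.
apply/eqmxP; rewrite sRK andbT -(mxrank_leqif_sup sRK).2 rR mxrank_ker mxrank_G12.
by apply/eqP; lia.
Qed.

Lemma exists_symplectic_restriction h (R : 'M[F]_(h + h, k)) :
  R *m G11 *m ctrmx R = Jmx F h -> R *m G12 = 0 -> (h + h + m = k)%N ->
  exists S : 'M[F]_(h + h), symplectic S /\ A *m G11 *m ctrmx R = G11 *m ctrmx R *m S.
Proof.
move=> RJ RG12 hkm.
have /submxP[D RAD] : (R *m A <= R)%MS.
  rewrite -(kerG12_eq_span RJ RG12 hkm); apply/sub_kermxP.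
  by rewrite -mulmxA mulA_G12 mulmx0.
have DJD : D *m Jmx F h *m ctrmx D = Jmx F h.
  have e : R *m G11 *m ctrmx R = R *m A *m G11 *m ctrmx (R *m A).
    by rewrite -{1}A_G11_unitary ctrmx_mul !mulmxA.
  by rewrite RAD ctrmx_mul RJ in e; rewrite {2}e -RJ !mulmxA.
have [uD' sS] := symplectic_inv_ctrmx DJD.
exists (invmx (ctrmx D)); split=> //.
have -> : G11 *m ctrmx R = A *m G11 *m ctrmx R *m ctrmx D.
  by rewrite -mulmxA -ctrmx_mul -RAD ctrmx_mul -{1}A_G11_unitary !mulmxA.
by rewrite mulmxK.
Qed.

Lemma symplectic_decomposition_diag p h (Lam : 'M[F]_(p, k + m)) :
  Lam *m G *m ctrmx Lam = 0 -> row_free Lam -> (p + p = k + m)%N ->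
  (h + h + m = k)%N -> symplectic_decomposition (DM *m G) (DL *m G) G h m.
Proof.
move=> isoL rfL pkm hkm.
have [N0 [N0A N0G12]] := exists_kerA_dual_G12.
have [X0 [isoX0 X0G12 rfX0]] := exists_isotropic_kerG12 isoL rfL pkm hkm.
have [R [RJ RG12]] := exists_symplectic_basis_kerG12 isoX0 X0G12 rfX0.
have [S [sS AS]] := exists_symplectic_restriction RJ RG12 hkm.
set U0 := col_mx (0 : 'M[F]_(k, m)) (1%:M : 'M_m).
set Ui := col_mx (- ctrmx N0) (0 : 'M[F]_(m, m)).
set U1 := col_mx (ctrmx R) (0 : 'M[F]_(m, h + h)).
have GU0 : G *m U0 = col_mx G12 0.
  by rewrite {1}G_blockE mul_block_col ?mulmx0 ?mul0mx ?mulmx1 ?add0r ?addr0.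
have GUi : G *m Ui = col_mx 0 1%:M.
  rewrite {1}G_blockE mul_block_col ?mulmx0 ?mul0mx ?addr0 mulmxN kerA_G11_ctrmx // oppr0.
  by rewrite mulNmx mulmxN opprK -ctrmx_mul N0G12 ctrmx1.
have GU1 : G *m U1 = col_mx (G11 *m ctrmx R) 0.
  by rewrite {1}G_blockE mul_block_col ?mulmx0 ?mul0mx ?addr0 mulNmx -ctrmx_mul RG12 ctrmx0 oppr0.
exists U0, Ui, U1, S; split=> //; split; last split; last split.
- rewrite -mulmxA !mul_mx_row GU0 GUi GU1 !ctrmx_row_mx !mul_col_mx.
  rewrite /U0 /Ui /U1 !ctrmx_col_mx !ctrmxK ctrmxN ctrmxK !ctrmx0 ctrmx1 !mul_row_col.
  rewrite ?mulmx0 ?mul0mx ?mul1mx ?addr0 ?add0r mulmxA RJ mulNmx (mulmxA N0).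
  rewrite kerA_mulG11 // mul0mx oppr0 RG12 mulNmx N0G12 !col_mx0.
  rewrite [RHS]block_mxEh /Jmx block_mxEh; congr row_mx.
  by rewrite [in RHS]block_mxEh -[LHS]block_mxEh /block_mx row_mx0.
- by rewrite -mulmxA GU0 mul_block_col mulA_G12 ?mul0mx ?mulmx0 ?addr0 col_mx0.
- by rewrite -mulmxA GUi mul_block_col ?mul0mx ?mulmx0 ?addr0 col_mx0.
rewrite -!mulmxA GU1 (mulmxA _ _ S) GU1 !mul_block_col !mul_col_mx.
by rewrite !mul_row_col ?mulmx0 ?mul0mx ?addr0 mul1mx mulmxA AS.
Qed.

End DiagonalPencil.

Section KroneckerIndexOne.
Variable F : numClosedFieldType.
Variables (k m : nat) (A : 'M[F]_k) (M L Jf P Q : 'M[F]_(k + m)).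
Local Notation DM := (block_mx A 0 0 1%:M : 'M[F]_(k + m)).
Local Notation DL := (block_mx 1%:M 0 0 0 : 'M[F]_(k + m)).
Local Notation G := (invmx Q *m Jf *m ctrmx (invmx Q)).
Hypothesis skewJf : ctrmx Jf = - Jf.
Hypothesis JfJf : Jf *m Jf = - 1%:M.
Hypothesis pairML : M *m Jf *m ctrmx M = L *m Jf *m ctrmx L.
Hypothesis unitP : P \in unitmx.
Hypothesis unitQ : Q \in unitmx.
Hypothesis PMQ : P *m M *m Q = DM.
Hypothesis PLQ : P *m L *m Q = DL.

Lemma kcf_mulPM : P *m M = DM *m invmx Q. Proof. by rewrite -PMQ mulmxK. Qed.
Lemma kcf_mulPL : P *m L = DL *m invmx Q. Proof. by rewrite -PLQ mulmxK. Qed.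

Lemma ctrmx_kcf_form : ctrmx G = - G.
Proof. by rewrite !ctrmx_mul ctrmxK skewJf mulNmx mulmxN mulmxA. Qed.

Lemma unitmx_kcf_form : G \in unitmx.
Proof.
by rewrite !unitmx_mul unitmx_inv unitQ unitmx_sqrN1 // unitmx_ctrmx ?unitmx_inv.
Qed.

Lemma pair_kcf_form : DM *m G *m ctrmx DM = DL *m G *m ctrmx DL.
Proof.
have := congr1 (fun Y => P *m Y *m ctrmx P) pairML.
rewrite /= !mulmxA kcf_mulPM kcf_mulPL -!mulmxA -!ctrmx_mul !mulmxA.
by rewrite kcf_mulPM kcf_mulPL ctrmx_mul !mulmxA.
Qed.

Lemma mxrank_kcf_index1 : [/\ (m <= k)%N, \rank M = k & \rank L = k].
Proof.
have [mk rA] := mxrank_A ctrmx_kcf_form unitmx_kcf_form pair_kcf_form.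
have rP (X : 'M[F]_(k + m)) : \rank (P *m X) = \rank X by rewrite eqmxMfull ?row_full_unit.
rewrite -(rP M) -(rP L) kcf_mulPM kcf_mulPL !mxrankMfree ?row_free_unit ?unitmx_inv //.
by rewrite !rank_diag_block_mx !mxrank1 mxrank0 rA; split=> //; lia.
Qed.

Lemma exists_lagrangian_kcf_form p (X : 'M[F]_(k + m, p)) :
  ctrmx X *m Jf *m X = 0 -> \rank X = p ->
  exists Lam : 'M[F]_(p, k + m), Lam *m G *m ctrmx Lam = 0 /\ row_free Lam.
Proof.
move=> isoX rX; exists (ctrmx X *m ctrmx Jf *m Q); split.
  have QG : Q *m G *m ctrmx Q = Jf.
    by rewrite !mulmxA mulmxV // mul1mx -mulmxA -ctrmx_mul mulmxV // ctrmx1 mulmx1.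
  have -> : ctrmx X *m ctrmx Jf *m Q *m G *m ctrmx (ctrmx X *m ctrmx Jf *m Q)
      = ctrmx X *m ctrmx Jf *m (Q *m G *m ctrmx Q) *m Jf *m X.
    by rewrite !ctrmx_mul !ctrmxK !mulmxA.
  by rewrite QG skewJf mulmxN !mulNmx -(mulmxA _ Jf Jf) JfJf mulmxN mulmx1 !mulNmx opprK.
rewrite /row_free -mulmxA mxrankMfree ?mxrank_ctrmx ?rX // row_free_unit.
by rewrite unitmx_mul unitQ unitmx_ctrmx ?unitmx_sqrN1.
Qed.

Lemma kcf_index1_symplectic_decomposition p (X : 'M[F]_(k + m, p)) h :
  ctrmx X *m Jf *m X = 0 -> \rank X = p -> (p + p = k + m)%N -> (h + h + m = k)%N ->
  symplectic_decomposition M L Jf h m.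
Proof.
move=> isoX rX pkm hkm.
have [Lam [isoL rfL]] := exists_lagrangian_kcf_form isoX rX.
have dec := symplectic_decomposition_diag ctrmx_kcf_form unitmx_kcf_form
  pair_kcf_form isoL rfL pkm hkm.
apply: (symplectic_decomposition_transport (T := Jf *m ctrmx (invmx Q))
          (P := invmx P) _ _ _ dec).
- rewrite ctrmx_mul ctrmxK skewJf !mulmxA -(mulmxA _ Jf Jf) JfJf.
  by rewrite !mulmxN mulmx1 opprK.
- by rewrite -[M](mulKmx unitP) kcf_mulPM !mulmxA.
by rewrite -[L](mulKmx unitP) kcf_mulPL !mulmxA.
Qed.

End KroneckerIndexOne.

Lemma kcf_index1_decomposition (F : numClosedFieldType) N (M L Jf : 'M[F]_N) k m
    (e : (k + m)%N = N) (A : 'M[F]_k) (P Q : 'M[F]_N) p (X : 'M[F]_(N, p)) :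
  ctrmx Jf = - Jf -> Jf *m Jf = - 1%:M -> M *m Jf *m ctrmx M = L *m Jf *m ctrmx L ->
  P \in unitmx -> Q \in unitmx ->
  P *m M *m Q = castmx (e, e) (block_mx A 0 0 1%:M) ->
  P *m L *m Q = castmx (e, e) (block_mx 1%:M 0 0 (0 : 'M_m)) ->
  ctrmx X *m Jf *m X = 0 -> \rank X = p -> (p + p = N)%N ->
  [/\ (m <= k)%N, \rank M = k, \rank L = k
    & forall h, (h + h + m = k)%N -> symplectic_decomposition M L Jf h m].
Proof.
case: N / e M L Jf P Q X => M L Jf P Q X skewJf JfJf pairML uP uQ.
rewrite !castmx_id => PMQ PLQ isoX rX pkm.
have [mk rM rL] := mxrank_kcf_index1 skewJf JfJf pairML uP uQ PMQ PLQ.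
split=> // h.
exact: (kcf_index1_symplectic_decomposition skewJf JfJf pairML uP uQ PMQ PLQ isoX rX pkm).
Qed.

Local Open Scope complex_scope.
Unset Implicit Arguments.

Theorem theorem2p3 (R : realType) (n : nat) (M L : 'M[R[i]]_(n + n)) :
  regular_pair M L -> symplectic_pair M L -> ind_inf_le M L 1 ->
  exists nh : nat, (nh <= n)%N /\
    \rank M = (n + nh)%N /\ \rank L = (n + nh)%N /\
    exists (U0 Uinf : 'M[R[i]]_(n + n, n - nh))
           (U1 : 'M[R[i]]_(n + n, nh + nh)) (Sh : 'M[R[i]]_(nh + nh)),
      symplectic Sh /\
      ctrmx (row_mx U1 (row_mx U0 Uinf)) *m Jmx _ n *m row_mx U1 (row_mx U0 Uinf)
        = block_mx (Jmx _ nh) 0 0 (Jmx _ (n - nh)) /\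
      M *m U0 = 0 /\ L *m Uinf = 0 /\ M *m U1 = L *m U1 *m Sh.
Proof.
move=> _ pairML [k [m [e [J [Nil [[_ [_ [P [Q [uP [uQ [PMQ PLQ]]]]]]] Nil0]]]]]].
rewrite expr1 in Nil0; rewrite Nil0 in PLQ.
set X := col_mx (1%:M : 'M[R[i]]_n) (0 : 'M[R[i]]_n).
have isoX : ctrmx X *m Jmx _ n *m X = 0.
  rewrite /X ctrmx_col_mx ctrmx1 ctrmx0 /Jmx mul_row_block mul_row_col.
  by rewrite ?mulmx0 ?mul0mx ?mulmx1 ?mul1mx ?add0r ?addr0.
have rX : \rank X = n by rewrite rank_col_mx0 mxrank1.
have [mk rM rL dec] := kcf_index1_decomposition (ctrmx_Jmx _ n) (Jmx_mulJmx _ n)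
  pairML uP uQ PMQ PLQ isoX rX erefl.
have mn : (m <= n)%N by lia.
exists (n - m)%N; split; first exact: leq_subr.
split; first by rewrite rM; lia.
split; first by rewrite rL; lia.
by rewrite subKn //; apply: dec; lia.
Qed.
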